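(* Let $\Sigma$ be an alphabet and $n\ge 1$ a natural number. There exist $n$ nondeterministic finite automata $A_1,\dots,A_n$, each with six states, such that $P\big(L_m(A_1\|A_2\|\cdots\|A_n)\big)=\Sigma^{2^n-1}$. Here $P$ is the projection from the overall alphabet of $A_1\|\cdots\|A_n$ to $\Sigma$.
   Context: A nondeterministic finite automaton is $A=(Q,\Sigma,\delta,I,F)$ with transition function $\delta\colon Q\times\Sigma\to 2^Q$, nonempty set of initial states $I$, and set of marked states $F$. Its recognized (marked) language is $L_m(A)=\{w\mid \delta(I,w)\cap F\neq\emptyset\}$. The parallel composition $A_1\|\cdots\|A_n$ is the synchronous product, defined as follows. Its alphabet is the union of the alphabets, and its states are tuples of states. On an event, all components whose alphabet contains that event move simultaneously; the other components stay unchanged. The initial states are the tuples of initial states, and the marked states are the tuples of marked states. The projection $P$ onto $\Sigma$ is the morphism that erases events not in $\Sigma$ and keeps events in $\Sigma$. *)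

From mathcomp Require Import all_boot.
Set Implicit Arguments. Unset Strict Implicit. Unset Printing Implicit Defensive.

(* Its own alphabet is [alph], a finite subset of E; the transition
   function is only meaningful on events of [alph] (values on other
   events are never used). *)
Record nfa (E : finType) := NFA {
  st : finType;
  alph : {set E};
  delta : st -> E -> {set st};
  init : {set st};
  marked : {set st};
  init_nonempty : init != set0
}.

Section NFA.
Variable E : finType.

Fixpoint delta_star (A : nfa E) (Q : {set st A}) (w : seq E) : {set st A} :=
  match w with
  | [::] => Q
  | e :: w' => delta_star (\bigcup_(q in Q) delta q e) w'
  end.

Definition Lm (A : nfa E) (w : seq E) : Prop :=
  all (fun e => e \in alph A) w /\ delta_star (init A) w :&: marked A != set0.

Definition comp_alph n (A : 'I_n -> nfa E) : {set E} := \bigcup_i alph (A i).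

Definition comp_st n (A : 'I_n -> nfa E) : finType :=
  {dffun forall i : 'I_n, st (A i)}.

Definition comp_delta n (A : 'I_n -> nfa E) (q : comp_st A) (e : E)
  : {set comp_st A} :=
  [set q' : comp_st A | [forall i,
     if e \in alph (A i) then q' i \in delta (q i) e else q' i == q i]].

Definition comp_init n (A : 'I_n -> nfa E) : {set comp_st A} :=
  [set q : comp_st A | [forall i, q i \in init (A i)]].

Definition comp_marked n (A : 'I_n -> nfa E) : {set comp_st A} :=
  [set q : comp_st A | [forall i, q i \in marked (A i)]].

Lemma comp_init_nonempty n (A : 'I_n -> nfa E) : comp_init A != set0.
Proof.
have h i : {x : st (A i) | x \in init (A i)}.
  case: (pickP (mem (init (A i)))) => [x hx|h0]; first by exists x.
  exfalso; move: (init_nonempty (A i)); case/set0Pn=> x hx.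
  by move: (h0 x); rewrite /= hx.
apply/set0Pn; exists [ffun i => sval (h i)].
rewrite inE; apply/forallP=> /= i.
by rewrite ffunE; case: (h i).
Qed.

Definition par_comp n (A : 'I_n -> nfa E) : nfa E :=
  @NFA E (comp_st A) (comp_alph A) (@comp_delta n A) (comp_init A)
       (comp_marked A) (comp_init_nonempty A).

End NFA.

(* The overall event set is Σ + X; projection P onto Σ erases events not in Σ. *)
Definition proj (S X : Type) (w : seq (S + X)) : seq S :=
  pmap (fun e => match e with inl s => Some s | inr _ => None end) w.

(* The automata form a binary counter whose n digits range over {0, 1, 2}:
   automaton i holds digit i, every letter of S increments digit 0, and the
   unobservable event [inr j] (j < n - 1) resets digit j from 2 to 0 while
   incrementing digit j + 1.  Every transition preserves
   value - (number of letters read), where value = sum_i digit_i 2^i; runs start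
   at value 0 and accept at value 2^n - 1, so every accepted word projects to
   exactly 2^n - 1 letters.  Conversely, after each letter the carries can be
   propagated, highest 2-digit first, until all digits are at most 1 again,
   which extends a run letter by letter until the value 2^n - 1 is reached,
   where all digits are 1. *)

From mathcomp Require Import all_boot zify.
Set Implicit Arguments. Unset Strict Implicit. Unset Printing Implicit Defensive.

Section DeltaStar.
Variable E : finType.
Variable A : nfa E.

Lemma delta_star_subset (Q Q' : {set st A}) w :
  Q \subset Q' -> delta_star Q w \subset delta_star Q' w.
Proof.
elim: w Q Q' => [|e w IH] Q Q' sQQ' //=; apply: IH.
apply/subsetP => x /bigcupP[q qQ xq].
by apply/bigcupP; exists q => //; apply: (subsetP sQQ').
Qed.

Lemma delta_star_cons (q q' : st A) e w :
  q' \in delta q e -> delta_star [set q'] w \subset delta_star [set q] (e :: w).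
Proof.
move=> qq'; apply: delta_star_subset; rewrite sub1set.
by apply/bigcupP; exists q; rewrite ?set11.
Qed.

Lemma delta_star_potential (f : st A -> nat) (p : pred E) (Q : {set st A}) w q :
  (forall q0 e q1, q1 \in delta q0 e -> f q1 = f q0 + p e) ->
  q \in delta_star Q w -> exists2 q0, q0 \in Q & f q = f q0 + count p w.
Proof.
move=> fstep; elim: w Q => [|e w IH] Q /=; first by exists q; rewrite ?addn0.
case/IH=> q1 /bigcupP[q0 q0Q q01] ->.
by exists q0; rewrite // (fstep _ _ _ q01) addnA.
Qed.

Lemma Lm_from (q : st A) w :
  q \in init A -> all (mem (alph A)) w ->
  delta_star [set q] w :&: marked A != set0 -> Lm A w.
Proof.
move=> qI wA /set0Pn[x]; rewrite inE => /andP[xw xM]; split=> //.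
apply/set0Pn; exists x; rewrite inE xM andbT.
by apply: (subsetP (delta_star_subset _ _)) xw; rewrite sub1set.
Qed.

End DeltaStar.

Lemma sum_ord_indicator n k (c : nat -> nat) :
  \sum_(i < n) (i == k :> nat) * c i = if k < n then c k else 0.
Proof.
rewrite -(@big_ord1_eq _ 0 addn c k n) [RHS]big_mkcond; apply: eq_bigr => i _.
by case: eqP; rewrite ?mul1n.
Qed.

Lemma sum_pow2 n : \sum_(i < n) 2 ^ i = 2 ^ n - 1.
Proof.
elim: n => [|n IH]; first by rewrite big_ord0.
by rewrite big_ord_recr /= IH expnS; have := expn_gt0 2 n; lia.
Qed.

Section Counter.
Variables (S : finType) (n : nat).
Hypothesis n_gt0 : 0 < n.

Definition event := (S + 'I_n.-1)%type.

Definition is_tick (e : event) : bool := if e is inl _ then true else false.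

Definition increments (i : 'I_n) (e : event) : bool :=
  if e is inr j then i == j.+1 :> nat else i == 0 :> nat.

Definition resets (i : 'I_n) (e : event) : bool :=
  if e is inr j then i == j :> nat else false.

Definition digit_alph i : {set event} := [set e | increments i e || resets i e].

(* Only the states 0, 1, 2 are reachable; 3, 4, 5 pad the automaton to six states. *)
Definition digit_delta i (d : 'I_6) (e : event) : {set 'I_6} :=
  [set d' : 'I_6 | (d' <= 2) && (d' + 2 * resets i e == d + increments i e)].

Lemma digit_init_neq0 : [set d : 'I_6 | d == 0 :> nat] != set0.
Proof. by apply/set0Pn; exists ord0; rewrite inE. Qed.

Definition digit_nfa i : nfa event :=
  @NFA event 'I_6 (digit_alph i) (digit_delta i) [set d : 'I_6 | d == 0 :> nat]
    [set d : 'I_6 | d == 1 :> nat] digit_init_neq0.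

Local Notation counter := (par_comp digit_nfa).
Local Notation state := (comp_st digit_nfa).
Definition digit (q : state) (i : 'I_n) : nat := q i : 'I_6.
Arguments digit : simpl never.

Definition value (q : state) : nat := \sum_(i < n) digit q i * 2 ^ i.

Definition digit_sum (q : state) : nat := \sum_(i < n) digit q i.

Lemma comp_delta_digit (q q' : state) e i : q' \in comp_delta q e ->
  digit q' i + 2 * resets i e = digit q i + increments i e /\
  (digit q i <= 2 -> digit q' i <= 2).
Proof.
rewrite inE => /forallP/(_ i); rewrite /= inE /digit.
case: ifP => [|/negbT]; first by rewrite inE => _ /andP[-> /eqP].
by rewrite negb_or => /andP[/negbTE-> /negbTE->] /eqP->; rewrite !addn0.
Qed.

Lemma comp_delta_weighted (c : nat -> nat) (q q' : state) e :
  q' \in comp_delta q e ->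
  \sum_(i < n) digit q' i * c i + 2 * \sum_(i < n) resets i e * c i =
  \sum_(i < n) digit q i * c i + \sum_(i < n) increments i e * c i.
Proof.
move=> qq'; rewrite big_distrr -!big_split; apply: eq_bigr => i _ /=.
have [dstep _] := comp_delta_digit i qq'.
by rewrite mulnA -!mulnDl dstep.
Qed.

Lemma sum_increments (c : nat -> nat) e :
  \sum_(i < n) increments i e * c i = if e is inr j then c j.+1 else c 0.
Proof.
case: e => [s|j]; rewrite sum_ord_indicator ?n_gt0 //.
by have := ltn_ord j; case: ifP => //; lia.
Qed.

Lemma sum_resets (c : nat -> nat) e :
  \sum_(i < n) resets i e * c i = if e is inr j then c j else 0.
Proof.
case: e => [s|j]; first by rewrite big1.
by rewrite sum_ord_indicator; have := ltn_ord j; case: ifP => //; lia.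
Qed.

Lemma value_step (q q' : state) e :
  q' \in comp_delta q e -> value q' = value q + is_tick e.
Proof.
move/(comp_delta_weighted (expn 2)); rewrite sum_increments sum_resets.
by case: e => [s|j]; rewrite /value /= ?expnS; lia.
Qed.

Lemma value_carry (q q' : state) j :
  q' \in comp_delta q (inr j) -> value q' = value q.
Proof. by move/value_step->; rewrite addn0. Qed.

Lemma value_tick (q q' : state) s :
  q' \in comp_delta q (inl s) -> value q' = (value q).+1.
Proof. by move/value_step->; rewrite addn1. Qed.

Lemma digit_sum_carry (q q' : state) j :
  q' \in comp_delta q (inr j) -> (digit_sum q').+1 = digit_sum q.
Proof.
move/(comp_delta_weighted (fun=> 1)).
rewrite (sum_increments (fun=> 1)) (sum_resets (fun=> 1)).
by rewrite !(eq_bigr _ (fun i _ => muln1 _)) -/(digit_sum q') -/(digit_sum q); lia.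
Qed.

Lemma value_init (q : state) : q \in comp_init digit_nfa -> value q = 0.
Proof.
rewrite inE => /forallP q0; rewrite /value big1 // => i _.
by have := q0 i; rewrite inE /digit => /eqP->.
Qed.

Lemma value_marked (q : state) : q \in comp_marked digit_nfa -> value q = 2 ^ n - 1.
Proof.
rewrite inE => /forallP q1; rewrite /value -sum_pow2; apply: eq_bigr => i _.
by have := q1 i; rewrite inE /digit => /eqP->; rewrite mul1n.
Qed.

Lemma size_proj (v : seq event) : size (proj v) = count is_tick v.
Proof. by rewrite size_pmap; apply: eq_count => -[]. Qed.

Lemma counter_sound v : Lm counter v -> size (proj v) = 2 ^ n - 1.
Proof.
case=> _ /set0Pn[q]; rewrite inE => /andP[qv /value_marked qM].
have [q0 /value_init q0I] :=
  @delta_star_potential _ counter value is_tick _ _ _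
    (fun q0 e q1 => @value_step q0 q1 e) qv.
by rewrite size_proj -qM q0I.
Qed.

Definition completes (q : state) (w : seq S) : Prop :=
  exists2 v, proj v = w &
    @delta_star _ counter [set q] v :&: comp_marked digit_nfa != set0.

Lemma completes_step (q q' : state) e w :
  q' \in comp_delta q e -> completes q' w -> completes q (proj [:: e] ++ w).
Proof.
move=> qq' [v <- acc]; exists (e :: v); first by case: e {qq'}.
case/set0Pn: acc => x; rewrite inE => /andP[xv xM].
apply/set0Pn; exists x; rewrite inE xM andbT.
exact: (subsetP (@delta_star_cons _ counter _ _ _ _ qq')).
Qed.

Definition next (q : state) e : state :=
  [ffun i => (inord (digit q i + increments i e - 2 * resets i e) : 'I_6)].

Lemma next_step (q : state) e :
  (forall i, digit q i <= 2) -> (forall i, increments i e -> digit q i < 2) ->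
  (forall i, resets i e -> digit q i = 2) -> next q e \in comp_delta q e.
Proof.
move=> q2 qinc qres; rewrite inE; apply/forallP => i /=; rewrite !inE ffunE.
have excl : ~~ (increments i e && resets i e) by case: e {qinc qres} => // j /=; lia.
move: (q2 i) (qinc i) (qres i) excl.
case: (increments i e); case: (resets i e) => //= qi2 qi hi _.
- by have := qi isT; rewrite inordK -/(digit q i); lia.
- by have := hi isT; rewrite inordK -/(digit q i); lia.
- by apply/eqP/val_inj; rewrite /= inordK -/(digit q i); lia.
Qed.

Lemma digit_value_le (q : state) i : digit q i * 2 ^ i <= value q.
Proof. by rewrite /value (bigD1 i) //= leq_addr. Qed.

Lemma carry_normalize w (q : state) :
  (forall i, digit q i <= 2) -> value q < 2 ^ n ->
  (forall q' : state,
     (forall i, digit q' i <= 1) -> value q' = value q -> completes q' w) ->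
  completes q w.
Proof.
have [m] := ubnP (digit_sum q); elim: m q => // m IH q qm q2 qV finish.
case: (pickP (fun i => digit q i == 2)) => [i0 qi0|no2]; last first.
  by apply: finish => // i; have := q2 i; have := no2 i; rewrite /=; lia.
case: (@arg_maxnP _ i0 (fun i => digit q i == 2) (fun j : 'I_n => val j) qi0)
  => j /eqP qj jmax.
have jn : j < n.-1.
  have := leq_ltn_trans (digit_value_le q j) qV.
  by rewrite qj -expnS ltn_exp2l //; lia.
have qq' : next q (inr (Ordinal jn)) \in comp_delta q (inr (Ordinal jn)).
  apply: next_step => // i /eqP ij; last by rewrite (_ : i = j) //; apply: val_inj.
  rewrite ltnNge; apply/negP => qi; have := jmax i.
  by have := q2 i; move: ij => /= ij; lia.
apply: (completes_step qq'); apply: IH => [|i||].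
- by rewrite -ltnS (digit_sum_carry qq'); exact: qm.
- exact: (comp_delta_digit i qq').2 (q2 i).
- by rewrite (value_carry qq').
- by move=> q' q'1; rewrite (value_carry qq'); apply: finish.
Qed.

Lemma marked_of_value (q : state) :
  (forall i, digit q i <= 1) -> value q = 2 ^ n - 1 -> q \in comp_marked digit_nfa.
Proof.
move=> q1 qV; rewrite inE; apply/forallP => i; rewrite inE -/(digit q i).
rewrite eqn_leq q1 lt0n; apply/negP => /eqP qi0.
have : value q + 2 ^ i <= 2 ^ n - 1.
  rewrite -sum_pow2 /value (bigD1 i) //= [X in _ <= X](bigD1 i) //= qi0 mul0n.
  rewrite add0n addnC leq_add2l; apply: leq_sum => k _.
  by rewrite -[leqRHS]mul1n leq_mul2r q1 orbT.
by rewrite qV; have := expn_gt0 2 i; lia.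
Qed.

Lemma counter_complete w (q : state) :
  (forall i, digit q i <= 1) -> value q + size w = 2 ^ n - 1 -> completes q w.
Proof.
elim: w q => [|s w IH] q q1 qV.
  exists [::] => //; apply/set0Pn; exists q.
  by rewrite in_setI set11 marked_of_value // -qV addn0.
have qq' : next q (inl s) \in comp_delta q (inl s).
  by apply: next_step => // i; have := q1 i; rewrite /=; lia.
apply: (completes_step qq'); apply: carry_normalize => [i||q' q'1 q'V].
- by apply: (comp_delta_digit i qq').2; have := q1 i; lia.
- by rewrite (value_tick qq'); move: qV => /=; have := expn_gt0 2 n; lia.
- by apply: IH => //; rewrite q'V (value_tick qq') -qV /=; lia.
Qed.

Lemma counter_alph (v : seq event) : all (mem (alph counter)) v.
Proof.
apply/allP => -[s|j] _; apply/bigcupP.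
  by exists (Ordinal n_gt0); rewrite ?inE.
have jn : j < n by rewrite (leq_trans (ltn_ord j)) ?leq_pred.
by exists (Ordinal jn); rewrite ?inE //= eqxx orbT.
Qed.

Lemma counter_accepts w : size w = 2 ^ n - 1 -> exists v, Lm counter v /\ proj v = w.
Proof.
move=> wn; pose q0 : state := [ffun => ord0].
have q0I : q0 \in comp_init digit_nfa.
  by rewrite inE; apply/forallP => i; rewrite ffunE inE.
have [v pv acc] : completes q0 w.
  apply: counter_complete => [i|]; first by rewrite /digit ffunE.
  by rewrite (value_init q0I) wn.
by exists v; split; first exact: (@Lm_from _ counter q0 v q0I (counter_alph v) acc).
Qed.

End Counter.

Theorem lemma8 (S : finType) (n : nat) (hn : 1 <= n) :
  exists (X : finType) (A : 'I_n -> nfa (S + X)%type),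
    (forall i, #|st (A i)| = 6) /\
    (forall w : seq S,
       (exists v : seq (S + X), Lm (par_comp A) v /\ proj v = w) <->
       size w = 2 ^ n - 1).
Proof.
exists 'I_n.-1, (@digit_nfa S n); split=> [i|w]; first exact: card_ord.
split=> [[v [/(counter_sound hn) vn <-]] //|]; exact: (@counter_accepts S n hn w).
Qed.
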